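(* Let $(X,d)$ be an $n$-point metric space ($n\ge2$) with aspect ratio $\alpha=\mathrm{diam}(X)/\mathrm{sep}(X)$, where $\mathrm{diam}(X)=\max_{x,y}d(x,y)$ and $\mathrm{sep}(X)=\min_{x\ne y}d(x,y)$. Then for every $0<\varepsilon<1$ and every integer $k\ge(n+\frac32)(\frac{\alpha}{\varepsilon}+\mathrm{diam}(X)+1)$, $(X,d)$ embeds with distortion at most $(1-\varepsilon)^{-1}$ into $([\mathbb{N}]^k,d^{(k)}_{\mathrm{I}})$; that is, there are $s>0$ and $f:X\to[\mathbb{N}]^k$ with $s\,d(x,y)\le d^{(k)}_{\mathrm{I}}(f(x),f(y))\le s(1-\varepsilon)^{-1}d(x,y)$ for all $x,y\in X$. In particular, for every finite metric space $X$ and every $\varepsilon>0$ there is $k\in\mathbb{N}$ such that $X$ embeds into $([\mathbb{N}]^k,d^{(k)}_{\mathrm{I}})$ (hence into $([\mathbb{N}]^{<\omega},d_{\mathrm{I}})$) with distortion at most $1+\varepsilon$.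
   Context: For $k\in\mathbb{N}$, $[\mathbb{N}]^k$ is the set of $k$-element subsets of $\mathbb{N}$ written increasingly. In Kalton's interlacing graph on $[\mathbb{N}]^k$, $A=\{a_1<\dots<a_k\}\ne B=\{b_1<\dots<b_k\}$ are adjacent iff either $a_i\le b_i\le a_{i+1}$ ($1\le i<k$) and $a_k\le b_k$, or $b_i\le a_i\le b_{i+1}$ ($1\le i<k$) and $b_k\le a_k$; $d^{(k)}_{\mathrm{I}}$ is the graph metric. $([\mathbb{N}]^{<\omega},d_{\mathrm{I}})$ is the universal interlacing graph on all finite subsets, in which additionally sets whose cardinalities differ by one are adjacent when they interlace ($\{a_1<\dots<a_{m+1}\}$ and $\{b_1<\dots<b_m\}$ with $a_i\le b_i\le a_{i+1}$), and $\emptyset$ is adjacent to all singletons; $d_{\mathrm{I}}$ restricted to $[\mathbb{N}]^k$ equals $d^{(k)}_{\mathrm{I}}$. *)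

From HB Require Import structures.
From mathcomp Require Import all_boot all_order all_algebra.
From mathcomp Require Import reals.
From Stdlib Require Import ClassicalEpsilon.
Set Implicit Arguments. Unset Strict Implicit. Unset Printing Implicit Defensive.
Import Order.TTheory GRing.Theory Num.Theory.

Definition is_kset (k : nat) (A : seq nat) : bool :=
  (size A == k) && sorted ltn A.

(* [interlace k A B] : a_i <= b_i <= a_{i+1} (1 <= i < k) and a_k <= b_k
   (0-based indices here). *)
Definition interlace (k : nat) (A B : seq nat) : bool :=
  [forall i : 'I_k.-1, (nth 0 A i <= nth 0 B i <= nth 0 A i.+1)%N]
  && (nth 0 A k.-1 <= nth 0 B k.-1)%N.

Definition interlace_adj (k : nat) (A B : seq nat) : bool :=
  (A != B) && (interlace k A B || interlace k B A).

Definition kwalk (k : nat) (A B : seq nat) (m : nat) : Prop :=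
  is_kset k A /\
  exists p : seq (seq nat),
    [/\ size p = m, all (is_kset k) p, path (interlace_adj k) A p
      & last A p = B].

Definition kwalkb (k : nat) (A B : seq nat) : pred nat :=
  fun m => if excluded_middle_informative (kwalk k A B m) then true else false.

(* graph metric d_I^(k): least length of a walk (0 if none exists, which
   never happens between points of [N]^k since the graph is connected) *)
Definition dI (k : nat) (A B : seq nat) : nat :=
  match excluded_middle_informative (exists m, kwalkb k A B m) with
  | left h => ex_minn h
  | right _ => 0%N
  end.

Local Open Scope ring_scope.

Definition is_metric (R : realFieldType) (T : finType) (d : T -> T -> R) : Prop :=
  [/\ forall x y, 0 <= d x y,
      forall x y, d x y = 0 <-> x = y,
      forall x y, d x y = d y x
    & forall x y z, d x z <= d x y + d y z].

Definition diam (R : realFieldType) (T : finType) (d : T -> T -> R) : R :=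
  \big[Num.max/0]_(p : T * T) d p.1 p.2.

(* sep(X) = min_{x <> y} d(x,y); the neutral value diam(X) is harmless since
   every distance is <= diam(X) and the index set is nonempty when |X| >= 2 *)
Definition sep (R : realFieldType) (T : finType) (d : T -> T -> R) : R :=
  \big[Num.min/diam d]_(p : T * T | p.1 != p.2) d p.1 p.2.

From HB Require Import structures.
From mathcomp Require Import all_boot all_order all_algebra.
From mathcomp Require Import reals zify ring lra.
From Stdlib Require Import ClassicalEpsilon.
Import Order.TTheory GRing.Theory Num.Theory.
Set Implicit Arguments. Unset Strict Implicit. Unset Printing Implicit Defensive.

(* A k-set A is described by its counting function cnt t A = #{a in A | a < t}.
   A interlaces B exactly when cnt t B <= cnt t A <= cnt t B + 1 for all t,
   so along an edge each counting function moves by at most one.  This gives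
   (1) a lower bound: the difference of two counting functions at two probe
   points changes by at most one per edge.
   To an integer "profile" u : nat -> [0, L] we attach the k-set block_set u,
   a union of n intervals of length L, the j-th one shifted left by u j, plus
   a padding interval.  Raising a profile by at most one in every coordinate
   is one interlacing step, so
   (2) dI (block_set u) (block_set v) <= 2 max_j |u j - v j|,
   while the probe point of block j counts L j + u j, so (1) gives
   (3) u i + v j <= dI (block_set u) (block_set v) + v i + u j.
   Taking u = D x (.) for an integer metric D bounded by L, (2) and (3)
   show x |-> block_set (D x (.)) scales distances exactly by 2.  Finally,
   with M = 1 / (eps sep), a real metric d is rounded to the integer metric
   D = floor(M d) + 1 off the diagonal; as M d >= 1/eps for distinct points,
   M d < D <= M d + 1 <= M d / (1 - eps), and D <= M diam + 1, so the
   hypothesis on k leaves room for n blocks of length L = floor(M diam) + 1.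
   The second claim follows by choosing eps' = eps / (1 + eps). *)

Definition cnt (t : nat) (A : seq nat) : nat := count (fun a => a < t)%N A.

Lemma cnt_eq0 (a t : nat) (A : seq nat) :
  all (ltn a) A -> (t <= a)%N -> cnt t A = 0%N.
Proof.
move=> hA hta; apply/eqP; rewrite -leqn0 leqNgt -has_count.
by apply/hasPn => b /(allP hA) hb /=; rewrite -leqNgt (leq_trans hta (ltnW hb)).
Qed.

Lemma ltn_cnt_nth (A : seq nat) (t i : nat) : sorted ltn A -> (i < size A)%N ->
  (i < cnt t A)%N = (nth 0%N A i < t)%N.
Proof.
elim: A i => [//|a A IH] i hs.
have hall : all (ltn a) A by apply: order_path_min hs; exact: ltn_trans.
have hsA : sorted ltn A := path_sorted hs.
rewrite /cnt /= -/(cnt t A); case: i => [|i] /= hi.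
  by case: (ltnP a t) => hat //=; rewrite (cnt_eq0 hall).
case: (ltnP a t) => hat /=; first by rewrite add1n ltnS IH.
have h : (a < nth 0%N A i)%N := allP hall _ (mem_nth 0%N hi).
rewrite (cnt_eq0 hall) //; lia.
Qed.

Lemma interlace_cnt (k : nat) (A B : seq nat) (t : nat) :
  is_kset k A -> is_kset k B -> interlace k A B ->
  (cnt t B <= cnt t A)%N /\ (cnt t A <= (cnt t B).+1)%N.
Proof.
move=> /andP[/eqP hA sA] /andP[/eqP hB sB] /andP[/forallP hf hl].
have le_AB i : (i < k)%N -> (nth 0%N A i <= nth 0%N B i)%N.
  move=> hi; case: (ltnP i k.-1) => h; first by case/andP: (hf (Ordinal h)).
  by have -> : i = k.-1 by lia.
have le_BA i : (i.+1 < k)%N -> (nth 0%N B i <= nth 0%N A i.+1)%N.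
  move=> hi; have h : (i < k.-1)%N by lia.
  by case/andP: (hf (Ordinal h)).
have cntA : (cnt t A <= k)%N by rewrite -hA count_size.
have cntB : (cnt t B <= k)%N by rewrite -hB count_size.
split.
- case EB: (cnt t B) => [//|m].
  have hmk : (m < k)%N by rewrite EB in cntB.
  have hm : (nth 0%N B m < t)%N by rewrite -ltn_cnt_nth ?hB ?EB.
  by rewrite ltn_cnt_nth ?hA //; exact: leq_ltn_trans (le_AB m hmk) hm.
- case EA: (cnt t A) => [//|[//|m]].
  have hmk : (m.+1 < k)%N by rewrite EA in cntA.
  have hm : (nth 0%N A m.+1 < t)%N by rewrite -ltn_cnt_nth ?hA ?EA.
  by rewrite ltnS ltn_cnt_nth ?hB; [exact: leq_ltn_trans (le_BA m hmk) hm | lia | lia].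
Qed.

Lemma cnt_interlace (k : nat) (A B : seq nat) : is_kset k A -> is_kset k B ->
  (forall t, (cnt t B <= cnt t A)%N /\ (cnt t A <= (cnt t B).+1)%N) ->
  interlace k A B.
Proof.
move=> /andP[/eqP hA sA] /andP[/eqP hB sB] hc.
have le_AB i : (i < k)%N -> (nth 0%N A i <= nth 0%N B i)%N.
  move=> hi; have [h _] := hc (nth 0%N B i).+1.
  have : (i < cnt (nth 0%N B i).+1 B)%N by rewrite ltn_cnt_nth ?hB.
  by move=> /leq_trans /(_ h); rewrite ltn_cnt_nth ?hA.
have le_BA i : (i.+1 < k)%N -> (nth 0%N B i <= nth 0%N A i.+1)%N.
  move=> hi; have [_ h] := hc (nth 0%N A i.+1).+1.
  have : (i.+1 < cnt (nth 0%N A i.+1).+1 A)%N by rewrite ltn_cnt_nth ?hA.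
  move=> /leq_trans /(_ h); rewrite ltnS ltn_cnt_nth ?hB //; lia.
apply/andP; split.
  by apply/forallP => i; have hi := ltn_ord i; rewrite le_AB ?le_BA //; lia.
case: k hA hB le_AB {le_BA hc} => [|k] hA hB le_AB; last exact: le_AB.
by rewrite !nth_default ?hA ?hB.
Qed.

Lemma adj_cnt (k : nat) (A B : seq nat) (t1 t2 : nat) :
  is_kset k A -> is_kset k B -> interlace_adj k A B ->
  (cnt t1 A + cnt t2 B <= 1 + cnt t1 B + cnt t2 A)%N.
Proof.
move=> hA hB /andP[_ /orP[h|h]].
  have := interlace_cnt t1 hA hB h; have := interlace_cnt t2 hA hB h; lia.
have := interlace_cnt t1 hB hA h; have := interlace_cnt t2 hB hA h; lia.
Qed.

Lemma kwalk_cnt (k : nat) (A B : seq nat) (m t1 t2 : nat) : kwalk k A B m ->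
  (cnt t1 A + cnt t2 B <= m + cnt t1 B + cnt t2 A)%N.
Proof.
move=> [hA [p [<- hp hpath <-]]].
elim: p A hA hp hpath => [|C p IH] A hA /=; first lia.
move=> /andP[hC hp] /andP[hAC hpath].
have := IH C hC hp hpath; have := adj_cnt t1 t2 hA hC hAC; lia.
Qed.

Lemma dI_minimal (k : nat) (A B : seq nat) (p : seq (seq nat)) :
  is_kset k A -> all (is_kset k) p -> path (interlace_adj k) A p ->
  last A p = B ->
  kwalk k A B (dI k A B) /\ (forall m, kwalk k A B m -> (dI k A B <= m)%N).
Proof.
move=> hA hp hpath hlast.
have hex : exists m, kwalkb k A B m.
  exists (size p); rewrite /kwalkb; case: excluded_middle_informative => // [[]].
  by split=> //; exists p.
rewrite /dI; case: excluded_middle_informative => [h|/(_ hex)//].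
case: ex_minnP => m hm hmin; split.
  by move: hm; rewrite /kwalkb; case: excluded_middle_informative.
by move=> m' hm'; apply: hmin; rewrite /kwalkb; case: excluded_middle_informative.
Qed.

Lemma dI_refl (k : nat) (A : seq nat) : is_kset k A -> dI k A A = 0%N.
Proof.
move=> hA; have [_ hmin] := @dI_minimal k A A [::] hA erefl erefl erefl.
by apply/eqP; rewrite -leqn0; apply: hmin; split=> //; exists [::].
Qed.

Lemma shorten_path (T : eqType) (e : rel T) (P : pred T) (x : T) (p : seq T) :
  all P p -> path (fun a b => (a == b) || e a b) x p ->
  exists q, [/\ all P q, path (fun a b => (a != b) && e a b) x q,
    last x q = last x p & (size q <= size p)%N].
Proof.
elim: p x => [|y p IH] x /=; first by move=> _ _; exists [::].
move=> /andP[hy hp] /andP[hxy hpath].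
have [q [hq1 hq2 hq3 hq4]] := IH y hp hpath.
case: (eqVneq x y) => [->|hne]; first by exists q; split => //; exact: leqW.
rewrite (negbTE hne) /= in hxy.
by exists (y :: q); split => //=; rewrite ?hy ?hq1 ?hq2 ?hne ?hxy.
Qed.

(* Interlacing adjacency with loops allowed; walks along it are easier to
   build and are shortened to genuine walks by shorten_path. *)
Definition lazy_adj (k : nat) (A B : seq nat) : bool :=
  (A == B) || (interlace k A B || interlace k B A).

Lemma dI_lazy_walk (k : nat) (A : seq nat) (p : seq (seq nat)) :
  is_kset k A -> all (is_kset k) p -> path (lazy_adj k) A p ->
  kwalk k A (last A p) (dI k A (last A p)) /\ (dI k A (last A p) <= size p)%N.
Proof.
move=> hA hp hpath.
have [q [hq hqpath hqlast hqsize]] := shorten_path hp hpath.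
have [hw hmin] := dI_minimal hA hq hqpath hqlast.
split=> //; apply: leq_trans (hmin (size q) _) hqsize.
by split=> //; exists q.
Qed.

Lemma path_iota_map (T : Type) (R : rel T) (F : nat -> T) (m N : nat) :
  (forall i, (m <= i < m + N)%N -> R (F i) (F i.+1)) ->
  path R (F m) [seq F i | i <- iota m.+1 N] /\
  last (F m) [seq F i | i <- iota m.+1 N] = F (m + N).
Proof.
elim: N m => [|N IH] m h /=; first by rewrite addn0.
have [h1 h2] := IH m.+1 (fun i hi => h i ltac:(lia)).
by rewrite h1 h2 addSnnS h //; lia.
Qed.

Lemma cnt_iota (t m l : nat) : cnt t (iota m l) = minn l (t - m).
Proof.
elim: l => [|l IH]; first by rewrite /cnt /= min0n.
rewrite -addn1 iotaD /cnt count_cat -/(cnt t _) IH /= addn0.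
case: ltnP => h /=; lia.
Qed.

Lemma sorted_cat_iota (A : seq nat) (m l : nat) :
  sorted ltn A -> all (fun a => a < m)%N A -> sorted ltn (A ++ iota m l).
Proof.
move=> hs ha; have tr : transitive ltn by move=> ? ? ?; exact: ltn_trans.
rewrite sorted_pairwise // pairwise_cat -!sorted_pairwise // hs iota_ltn_sorted.
rewrite !andbT; apply/allrelP => a b /(allP ha) ha' hb.
by rewrite mem_iota in hb; lia.
Qed.

Fixpoint blocks (L : nat) (u : nat -> nat) (m : nat) : seq nat :=
  if m is m'.+1 then blocks L u m' ++ iota (2 * L * m' + L - u m') L else [::].

Definition block_set (n L p : nat) (u : nat -> nat) : seq nat :=
  blocks L u n ++ iota (2 * L * n) p.

Lemma block_set_ext (n L p : nat) (u u' : nat -> nat) :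
  (forall j, u j = u' j) -> block_set n L p u = block_set n L p u'.
Proof. by move=> h; rewrite /block_set; congr (_ ++ _); elim: n => //= n ->; rewrite h. Qed.

Lemma size_blocks (L : nat) (u : nat -> nat) (m : nat) :
  size (blocks L u m) = (m * L)%N.
Proof. by elim: m => //= m IH; rewrite size_cat IH size_iota mulSn addnC. Qed.

Lemma block_set_kset (n L p : nat) (u : nat -> nat) :
  (forall j, u j <= L)%N -> is_kset (n * L + p) (block_set n L p u).
Proof.
move=> hu; apply/andP; split; first by rewrite size_cat size_blocks size_iota.
suff H m : sorted ltn (blocks L u m) /\ all (fun a => a < 2 * L * m)%N (blocks L u m).
  by have [ha hb] := H n; exact: sorted_cat_iota.
elim: m => [//|m [h1 h2]] /=; have hum := hu m.
split; first by apply: sorted_cat_iota => //; apply/allP => a /(allP h2); lia.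
rewrite all_cat; apply/andP; split.
  by apply/allP => a /(allP h2); rewrite mulnS; lia.
by apply/allP => a; rewrite mem_iota mulnS; lia.
Qed.

Lemma cnt_blocksS (t L : nat) (u : nat -> nat) (m : nat) :
  cnt t (blocks L u m.+1) =
  (cnt t (blocks L u m) + minn L (t - (2 * L * m + L - u m)))%N.
Proof. by rewrite /= /cnt count_cat -!/(cnt t _) cnt_iota. Qed.

Lemma cnt_blocks_probe (L : nat) (u : nat -> nat) (j m : nat) :
  (forall i, u i <= L)%N ->
  cnt (2 * L * j + L) (blocks L u m) =
  if (m <= j)%N then (L * m)%N else (L * j + u j)%N.
Proof.
move=> hu; elim: m => [|m IH]; first by rewrite /cnt /= muln0.
have := hu m; have := hu j; rewrite cnt_blocksS IH.
case: (ltngtP m j) => h; last by rewrite h; lia.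
- have : (2 * L * m.+1 <= 2 * L * j)%N by rewrite leq_mul2l h orbT.
  rewrite mulnS -!mulnA; lia.
- have : (2 * L * j.+1 <= 2 * L * m)%N by rewrite leq_mul2l h orbT.
  rewrite mulnS -!mulnA; lia.
Qed.

Lemma cnt_block_set_probe (n L p : nat) (u : nat -> nat) (j : nat) :
  (j < n)%N -> (forall i, u i <= L)%N ->
  cnt (2 * L * j + L) (block_set n L p u) = (L * j + u j)%N.
Proof.
move=> hj hu; rewrite /block_set /cnt count_cat -!/(cnt _ _).
rewrite cnt_blocks_probe // ifF; last lia.
have : (2 * L * j.+1 <= 2 * L * n)%N by rewrite leq_mul2l hj orbT.
rewrite mulnS cnt_iota; lia.
Qed.

Lemma cnt_blocks_raise (L : nat) (u u' : nat -> nat) (t m : nat) :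
  (forall i, u i <= L /\ u' i <= L /\ u i <= u' i <= (u i).+1)%N ->
  (cnt t (blocks L u m) <= cnt t (blocks L u' m) <= (cnt t (blocks L u m)).+1)%N
  /\ ((2 * L * m <= t)%N -> cnt t (blocks L u m) = cnt t (blocks L u' m)).
Proof.
move=> hu; elim: m => [|m [IH1 IH2]]; first by rewrite /cnt.
rewrite !cnt_blocksS; have [h1 [h2 h3]] := hu m.
have -> : (2 * L * m.+1 = 2 * L * m + 2 * L)%N by rewrite mulnS addnC.
case: (leqP (2 * L * m) t) => hB; first by have := IH2 hB; lia.
split; last lia.
have -> : (t - (2 * L * m + L - u m) = 0)%N by lia.
have -> : (t - (2 * L * m + L - u' m) = 0)%N by lia.
lia.
Qed.

Lemma block_set_raise (n L p : nat) (u u' : nat -> nat) :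
  (forall i, u i <= L /\ u' i <= L /\ u i <= u' i <= (u i).+1)%N ->
  interlace (n * L + p) (block_set n L p u') (block_set n L p u).
Proof.
move=> hu; apply: cnt_interlace; try by apply: block_set_kset => i; have := hu i; lia.
move=> t; rewrite /block_set /cnt !count_cat -!/(cnt t _).
have [h _] := cnt_blocks_raise t n hu; lia.
Qed.

(* Upper bound (2) as a walk: raise u to max u v, then lower it to v. *)
Lemma block_set_walk (n L p : nat) (u v : nat -> nat) (m : nat) :
  (forall j, u j <= L /\ v j <= L)%N ->
  (forall j, u j <= v j + m /\ v j <= u j + m)%N ->
  exists q, [/\ all (is_kset (n * L + p)) q,
    path (lazy_adj (n * L + p)) (block_set n L p u) q,
    last (block_set n L p u) q = block_set n L p v & size q = (2 * m)%N].
Proof.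
move=> huv hclose.
pose w j := maxn (u j) (v j).
pose U i j := if (i <= m)%N then minn (u j + i) (w j) else maxn (w j - (i - m)) (v j).
pose F i := block_set n L p (U i).
have hUL i j : (U i j <= L)%N by have := huv j; rewrite /U /w; case: ifP; lia.
have hstep i : (0 <= i < 0 + 2 * m)%N -> lazy_adj (n * L + p) (F i) (F i.+1).
  move=> hi; apply/orP; right; apply/orP.
  case: (ltnP i m) => him; [right | left]; apply: block_set_raise => j;
    have := hclose j; have := huv j; rewrite /U /w.
  - by rewrite him (ltnW him); lia.
  - by rewrite ltnNge him /=; case: (leqP i m); lia.
have [hpath hlast] := path_iota_map hstep.
have hF0 : F 0%N = block_set n L p u.
  by apply: block_set_ext => j; have := hclose j; rewrite /U /w leq0n; lia.
have hFm : F (2 * m)%N = block_set n L p v.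
  apply: block_set_ext => j; have := hclose j; rewrite /U /w.
  by case: (leqP (2 * m) m); lia.
rewrite hF0 add0n hFm in hpath hlast.
exists [seq F i | i <- iota 1 (2 * m)]; split => //.
- by apply/allP => a /mapP [i _ ->]; exact: block_set_kset.
- by rewrite size_map size_iota.
Qed.

Lemma dI_block_set_le (n L p : nat) (u v : nat -> nat) (m : nat) :
  (forall j, u j <= L /\ v j <= L)%N ->
  (forall j, u j <= v j + m /\ v j <= u j + m)%N ->
  (dI (n * L + p) (block_set n L p u) (block_set n L p v) <= 2 * m)%N.
Proof.
move=> huv hclose; have [q [hq hpath <- <-]] := block_set_walk n p huv hclose.
have hu : forall j, (u j <= L)%N by move=> j; have := huv j; lia.
by have [_ ->] := dI_lazy_walk (block_set_kset n p hu) hq hpath.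
Qed.

(* Lower bound (3), from (1) at the probe points of blocks i and j. *)
Lemma dI_block_set_ge (n L p : nat) (u v : nat -> nat) (i j : nat) :
  (forall j, u j <= L /\ v j <= L)%N -> (i < n)%N -> (j < n)%N ->
  (u i + v j <= dI (n * L + p) (block_set n L p u) (block_set n L p v)
                + v i + u j)%N.
Proof.
move=> huv hi hj.
have hclose l : (u l <= v l + L /\ v l <= u l + L)%N by have := huv l; lia.
have hu : forall l, (u l <= L)%N by move=> l; have := huv l; lia.
have hv : forall l, (v l <= L)%N by move=> l; have := huv l; lia.
have [q [hq hpath hlast _]] := block_set_walk n p huv hclose.
have [hw _] := dI_lazy_walk (block_set_kset n p hu) hq hpath.
rewrite hlast in hw.
have := kwalk_cnt (2 * L * i + L) (2 * L * j + L) hw.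
rewrite !cnt_block_set_probe //; lia.
Qed.

Section IntegerEmbedding.
Variables (T : finType) (D : T -> T -> nat) (L p : nat).
Hypotheses (D0 : forall x, D x x = 0%N) (Dsym : forall x y, D x y = D y x)
  (Dtri : forall x y z, (D x z <= D x y + D y z)%N)
  (DL : forall x y, (D x y <= L)%N).

Definition profile (x : T) (j : nat) : nat :=
  if (j < #|T|)%N then D x (nth x (enum T) j) else 0%N.

Lemma profile_le (x : T) (j : nat) : (profile x j <= L)%N.
Proof. by rewrite /profile; case: ifP. Qed.

Lemma profile_lip (x y : T) (j : nat) : (profile y j <= profile x j + D x y)%N.
Proof.
rewrite /profile; case: ifP => hj //.
have -> : nth y (enum T) j = nth x (enum T) j.
  by apply: set_nth_default; rewrite -cardT.
by have := Dtri y x (nth x (enum T) j); rewrite (Dsym y x); lia.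
Qed.

Lemma profile_index (x y : T) : profile x (index y (enum T)) = D x y.
Proof. by rewrite /profile cardT index_mem mem_enum nth_index ?mem_enum. Qed.

Lemma integer_metric_embedding :
  exists f : T -> seq nat, (forall x, is_kset (#|T| * L + p) (f x)) /\
    forall x y, dI (#|T| * L + p) (f x) (f y) = (2 * D x y)%N.
Proof.
exists (fun x => block_set #|T| L p (profile x)); split.
  by move=> x; apply: block_set_kset => j; exact: profile_le.
move=> x y; have hb j : (profile x j <= L /\ profile y j <= L)%N.
  by rewrite !profile_le.
apply/eqP; rewrite eqn_leq; apply/andP; split.
  apply: dI_block_set_le => // j.
  by rewrite profile_lip (Dsym x y) profile_lip.
have index_lt z : (index z (enum T) < #|T|)%N by rewrite cardT index_mem mem_enum.
have := dI_block_set_ge p hb (index_lt y) (index_lt x).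
by rewrite !profile_index !D0 (Dsym y x); lia.
Qed.

End IntegerEmbedding.

Local Open Scope ring_scope.

Section FiniteMetric.
Variables (R : realType) (T : finType) (d : T -> T -> R).
Hypothesis d_metric : is_metric d.

Lemma dist0 (x : T) : d x x = 0.
Proof. by case: d_metric => _ h _ _; apply/h. Qed.

Lemma dist_gt0 (x y : T) : x != y -> 0 < d x y.
Proof.
case: d_metric => hge h _ _ hxy; rewrite lt_def hge andbT.
by apply: contraNneq hxy => /h ->.
Qed.

Lemma dist_le_diam (x y : T) : d x y <= diam d.
Proof. exact: (le_bigmax 0 (fun q : T * T => d q.1 q.2) (x, y)). Qed.

Lemma diam_ge0 : 0 <= diam d.
Proof. exact: bigmax_ge_id. Qed.

Lemma sep_le_dist (x y : T) : x != y -> sep d <= d x y.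
Proof. by move=> hxy; exact: (bigmin_le_cond _ (fun q : T * T => d q.1 q.2) (j := (x, y))). Qed.

Lemma sep_gt0 : (1 < #|T|)%N -> 0 < sep d.
Proof.
case/card_gt1P => x [y [_ _ hxy]].
apply: lt_bigmin => [|[a b] /= hab]; last exact: dist_gt0.
exact: lt_le_trans (dist_gt0 hxy) (dist_le_diam x y).
Qed.

Variable M : R.
Hypothesis M_gt0 : 0 < M.

Definition round_dist (x y : T) : nat :=
  if x == y then 0%N else (Num.Def.truncn (M * d x y)).+1.

Lemma scaled_dist_ge0 (x y : T) : 0 <= M * d x y.
Proof. by case: d_metric => hge _ _ _; rewrite mulr_ge0 // ltW. Qed.

Lemma round_dist0 (x : T) : round_dist x x = 0%N.
Proof. by rewrite /round_dist eqxx. Qed.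

Lemma round_dist_sym (x y : T) : round_dist x y = round_dist y x.
Proof. by case: d_metric => _ _ hsym _; rewrite /round_dist eq_sym hsym. Qed.

Lemma round_dist_bounds (x y : T) :
  x != y -> M * d x y < (round_dist x y)%:R <= M * d x y + 1.
Proof.
move=> hxy; rewrite /round_dist (negbTE hxy) truncnS_gt /= -natr1 lerD2r.
by have /andP[] := truncn_itv (scaled_dist_ge0 x y).
Qed.

Lemma round_dist_triangle (x y z : T) :
  (round_dist x z <= round_dist x y + round_dist y z)%N.
Proof.
case: (eqVneq x z) => [->|hxz]; first by rewrite round_dist0.
case: (eqVneq x y) => [<-|hxy]; first by rewrite round_dist0.
case: (eqVneq y z) => [<-|hyz]; first by rewrite round_dist0 addn0.
rewrite /round_dist (negbTE hxz) (negbTE hxy) (negbTE hyz) -ltnS -(ltr_nat R).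
have /andP[a _] := truncn_itv (scaled_dist_ge0 x z).
have /andP[_ b] := truncn_itv (scaled_dist_ge0 x y).
have /andP[_ c] := truncn_itv (scaled_dist_ge0 y z).
have : M * d x z <= M * d x y + M * d y z.
  by case: d_metric => _ _ _ htri; rewrite -mulrDr ler_wpM2l ?(ltW M_gt0) ?htri.
rewrite -!natr1 !natrD -!natr1 in b c *; lra.
Qed.

Lemma round_dist_le (x y : T) :
  (round_dist x y <= (Num.Def.truncn (M * diam d)).+1)%N.
Proof.
rewrite /round_dist; case: ifP => // _.
by rewrite ltnS le_truncn // ler_wpM2l ?(ltW M_gt0) ?dist_le_diam.
Qed.

End FiniteMetric.

(* Rounding up costs at most a factor 1/(1 - eps) on distances a with
   a * eps >= 1. *)
Lemma add1_le_div (R : realFieldType) (a eps : R) :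
  0 < eps -> eps < 1 -> 1 <= a * eps -> a + 1 <= a / (1 - eps).
Proof. by move=> he0 he1 ha; rewrite ler_pdivlMr ?subr_gt0 //; lra. Qed.

Lemma embedding_distortion (R : realType) (T : finType) (d : T -> T -> R) (n : nat) :
  is_metric d -> #|T| = n -> (2 <= n)%N ->
  forall (eps : R), 0 < eps -> eps < 1 ->
  forall k : nat,
    (n%:R + 3 / 2) * ((diam d / sep d) / eps + diam d + 1) <= k%:R ->
    exists (s : R) (f : T -> seq nat),
      [/\ 0 < s, forall x, is_kset k (f x)
        & forall x y,
            s * d x y <= (dI k (f x) (f y))%:R
            /\ (dI k (f x) (f y))%:R <= s * (1 - eps)^-1 * d x y].
Proof.
move=> dm hn hn2 eps eps0 eps1 k hk.
have sep0 : 0 < sep d by apply: sep_gt0; rewrite ?hn.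
pose M := (eps * sep d)^-1; pose L := (Num.Def.truncn (M * diam d)).+1.
have M0 : 0 < M by rewrite invr_gt0 mulr_gt0.
have MdE x y : M * d x y * eps = d x y / sep d.
  by rewrite /M invfM; field; rewrite !gt_eqF.
have nL_le_k : (n * L <= k)%N.
  rewrite -(ler_nat R) natrM; apply: le_trans hk.
  have Mdiam0 : 0 <= M * diam d := mulr_ge0 (ltW M0) (diam_ge0 d).
  have /andP[hL _] := truncn_itv Mdiam0.
  have hX : M * diam d = diam d / sep d / eps.
    by rewrite /M invfM; field; rewrite !gt_eqF.
  have n0 : 0 <= n%:R :> R := ler0n R n.
  have := diam_ge0 d; rewrite /L -natr1 hX in hL Mdiam0 *; nra.
have [f [f_kset f_dI]] := integer_metric_embedding (k - n * L)%N (round_dist0 d M)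
  (round_dist_sym dm M) (round_dist_triangle dm M0) (round_dist_le d M0).
rewrite hn subnKC // in f_kset f_dI.
exists (2 * M), f; split => //; first by rewrite mulr_gt0.
move=> x y; rewrite f_dI natrM.
case: (eqVneq x y) => [<-|hxy]; first by rewrite round_dist0 dist0 ?mulr0.
have /andP[lo hi] := round_dist_bounds dm M0 hxy.
have hsep : 1 <= M * d x y * eps by rewrite MdE ler_pdivlMr ?mul1r ?sep_le_dist.
have := add1_le_div eps0 eps1 hsep; rewrite mulrAC.
split; first by rewrite -mulrA ler_pM2l ?ltW.
by rewrite -!mulrA ler_pM2l // mulrC; lra.
Qed.

Theorem theorem5p3 :
  (forall (R : realType) (T : finType) (d : T -> T -> R) (n : nat),
     is_metric d -> #|T| = n -> (2 <= n)%N ->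
     forall (eps : R), 0 < eps -> eps < 1 ->
     forall k : nat,
       (n%:R + 3 / 2) * ((diam d / sep d) / eps + diam d + 1) <= k%:R ->
       exists (s : R) (f : T -> seq nat),
         [/\ 0 < s, forall x, is_kset k (f x)
           & forall x y,
               s * d x y <= (dI k (f x) (f y))%:R
               /\ (dI k (f x) (f y))%:R <= s * (1 - eps)^-1 * d x y])
  /\
  (forall (R : realType) (T : finType) (d : T -> T -> R),
     is_metric d ->
     forall (eps : R), 0 < eps ->
     exists (k : nat) (s : R) (f : T -> seq nat),
       [/\ 0 < s, forall x, is_kset k (f x)
         & forall x y,
             s * d x y <= (dI k (f x) (f y))%:R
             /\ (dI k (f x) (f y))%:R <= s * (1 + eps) * d x y]).
Proof.
split; first exact: embedding_distortion.
move=> R T d dm eps eps0.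
have [T2|T1] := ltnP 1 #|T|; last first.
  exists 0%N, 1, (fun _ => [::]); split => // x y.
  have -> : y = x by apply: (card_le1_eqP T1).
  by rewrite dI_refl // dist0 // !mulr0.
(* apply the first claim with eps' = eps / (1 + eps), so 1/(1-eps') = 1+eps *)
pose eps' := eps / (1 + eps).
have eps'0 : 0 < eps' by rewrite divr_gt0 ?addr_gt0.
have eps'1 : eps' < 1 by rewrite ltr_pdivrMr ?addr_gt0 // mul1r; lra.
pose B := (#|T|%:R + 3 / 2) * (diam d / sep d / eps' + diam d + 1).
have [s [f [s0 f_kset f_dist]]] :=
  embedding_distortion dm erefl T2 eps'0 eps'1 (ltW (truncnS_gt B)).
exists (Num.Def.truncn B).+1, s, f; split => // x y.
have -> : 1 + eps = (1 - eps')^-1 by rewrite /eps'; field; lra.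
exact: f_dist.
Qed.
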